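(* Let $\mathscr{G}=(G_{<},G_{=},G_{>},\sigma)$ be a graph $3$-partition on vertex set $L$ with coloring $\sigma\colon L\to M$. Then $\mathscr{G}$ can be explained by a relaxed scenario if and only if all of the following hold: $G_{<}$ and $G_{=}$ are properly colored by $\sigma$; $G_{<}$ and $G_{>}$ are cographs; and the pair $(\mathscr{R}_S(\mathscr{G}),\mathscr{F}_S(\mathscr{G}))$ is consistent.
   Context: All trees are planted phylogenetic trees: a tree $T$ has a distinguished vertex $0_T$ of degree $1$ whose unique neighbor $\rho_T$ is the root, and every vertex other than $0_T$ and the leaves $L(T)$ has at least two children. For $x,y\in V(T)$ write $y\preceq_T x$ if $x$ lies on the path from $0_T$ to $y$; edges are written $uv$ with $v\prec_T u$. The order extends to $V(T)\cup E(T)$: for a vertex $x$ and an edge $e=uv$, $x\preceq_T e$ iff $x\preceq_T v$, and $e\preceq_T x$ iff $u\preceq_T x$; for edges, $uv\preceq_T ab$ iff $v\preceq_T b$. $\mathrm{lca}_T(A)$ is the $\preceq_T$-minimal vertex that is an ancestor of all elements of $A$. A time map for $T$ is $\tau_T\colon V(T)\to\mathbb{R}$ with $\tau_T(x)<\tau_T(y)$ whenever $x\prec_T y$. A relaxed scenario $\mathscr{S}=(T,S,\sigma,\mu,\tau_T,\tau_S)$ consists of a gene tree $T$ with time map $\tau_T$, a species tree $S$ with time map $\tau_S$, a map $\sigma\colon L(T)\to M$ with $M\subseteq L(S)$, and a map $\mu\colon V(T)\to V(S)\cup E(S)$ such that (S0) $\mu(x)=0_S$ iff $x=0_T$; (S1)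 $\mu(x)\in L(S)$ iff $x\in L(T)$, in which case $\mu(x)=\sigma(x)$; (S2) if $\mu(x)\in V(S)$ then $\tau_S(\mu(x))=\tau_T(x)$; (S3) if $\mu(x)=uv\in E(S)$ then $\tau_S(v)<\tau_T(x)<\tau_S(u)$. The graphs $G_{=}(\mathscr{S})$, $G_{<}(\mathscr{S})$, $G_{>}(\mathscr{S})$ have vertex set $L(T)$, and for distinct $x,y$ the pair $xy$ is an edge of $G_{=}(\mathscr{S})$, $G_{<}(\mathscr{S})$, resp. $G_{>}(\mathscr{S})$ iff $\tau_T(\mathrm{lca}_T(x,y))$ is $=$, $<$, resp. $>$ than $\tau_S(\mathrm{lca}_S(\sigma(x),\sigma(y)))$. A graph $3$-partition $\mathscr{G}=(G_{<},G_{=},G_{>},\sigma)$ is an ordered tuple of three edge-disjoint graphs on a common vertex set $L$ with a coloring $\sigma\colon L\to M$ such that every unordered pair of distinct elements of $L$ is an edge of exactly one of the three graphs. It is explained by a relaxed scenario $\mathscr{S}=(T,S,\sigma,\mu,\tau_T,\tau_S)$ (with the same $\sigma$, so $L(T)=L$) if $G_{<}=G_{<}(\mathscr{S})$, $G_{=}=G_{=}(\mathscr{S})$, $G_{>}=G_{>}(\mathscr{S})$. A cograph is a graph with no induced path on four vertices. A rooted triple $xy|z$ is displayed by a tree $T$ if $\mathrm{lca}_T(x,y)\prec_T\mathrm{lca}_T(x,z)=\mathrm{lca}_T(y,z)$. A pair $(\mathscr{R},\mathscr{F})$ of triple sets is consistent if some tree displays all triples in $\mathscr{R}$ and none in $\mathscr{F}$.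 $\mathscr{R}_S(\mathscr{G})$ contains $XY|Z$ whenever there are $x,y,z\in L$ with pairwise distinct colors $X=\sigma(x)$, $Y=\sigma(y)$, $Z=\sigma(z)$ such that either ($xz,yz\in E(G_<)$ and $xy\notin E(G_<)$) or ($xy\in E(G_>)$ and $xz,yz\notin E(G_>)$). $\mathscr{F}_S(\mathscr{G})$ contains $XZ|Y$ and $YZ|X$ whenever there are $x,y,z\in L$ with pairwise distinct colors $X=\sigma(x),Y=\sigma(y),Z=\sigma(z)$ such that $xz,yz\in E(G_=)$ and $xy\notin E(G_=)$. *)

From mathcomp Require Import all_boot.
From Stdlib Require Import Reals.
Set Implicit Arguments. Unset Strict Implicit. Unset Printing Implicit Defensive.

(* A tree on the finite vertex type V is given by its planted vertex [pt0]
   and a parent map [ptpar]; [ptpar pt0 = pt0] and every vertex reaches [pt0]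
   by iterating [ptpar] (so the parent graph is a tree rooted at pt0). *)
Record ptree (V : finType) := PTree {
  pt0 : V;
  ptpar : V -> V;
  ptpar0 : ptpar pt0 = pt0;
  ptreach : forall x, exists k, iter k ptpar x = pt0
}.

Definition is_child V (T : ptree V) (c x : V) : Prop :=
  c <> pt0 T /\ ptpar T c = x.

Definition is_leaf V (T : ptree V) (x : V) : Prop :=
  x <> pt0 T /\ forall c, ~ is_child T c x.

Definition planted_phylo V (T : ptree V) : Prop :=
  (exists r, is_child T r (pt0 T) /\ forall r', is_child T r' (pt0 T) -> r' = r) /\
  (forall x, x <> pt0 T -> ~ is_leaf T x ->
     exists c1 c2, c1 <> c2 /\ is_child T c1 x /\ is_child T c2 x).

Definition preceq V (T : ptree V) (y x : V) : Prop :=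
  exists k, iter k (ptpar T) y = x.

Definition prec V (T : ptree V) (y x : V) : Prop := preceq T y x /\ y <> x.

Definition is_lca2 V (T : ptree V) (a b z : V) : Prop :=
  preceq T a z /\ preceq T b z /\
  forall w, preceq T a w -> preceq T b w -> preceq T z w.

Definition time_map V (T : ptree V) (tau : V -> R) : Prop :=
  forall x y, prec T x y -> (tau x < tau y)%R.

(* Leaves of the gene tree are identified with L via [lfT] (bijection onto
   L(T)); the colour set M is identified with a subset of L(S) via [lfS].
   mu x = inl v means mu(x) is the vertex v of S; mu x = inr v (v <> 0_S)
   means mu(x) is the edge (ptpar S v) v of S. *)
Definition relaxed_scenario (L M VT VS : finType)
  (T : ptree VT) (lfT : L -> VT) (S : ptree VS) (lfS : M -> VS)
  (sigma : L -> M) (mu : VT -> VS + VS) (tT : VT -> R) (tS : VS -> R) : Prop :=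
  planted_phylo T /\ planted_phylo S /\
  (injective lfT /\ (forall x, is_leaf T x <-> exists l, lfT l = x)) /\
  (injective lfS /\ (forall m, is_leaf S (lfS m))) /\
  time_map T tT /\ time_map S tS /\
  (forall x v, mu x = inr v -> v <> pt0 S) /\
  (forall x, mu x = inl (pt0 S) <-> x = pt0 T) /\
  (forall x, (exists v, mu x = inl v /\ is_leaf S v) <-> is_leaf T x) /\
           (forall l, mu (lfT l) = inl (lfS (sigma l))) /\
  (forall x v, mu x = inl v -> tS v = tT x) /\
  (forall x v, mu x = inr v -> (tS v < tT x)%R /\ (tT x < tS (ptpar S v))%R).

Definition scen_graph (L M VT VS : finType)
  (T : ptree VT) (lfT : L -> VT) (S : ptree VS) (lfS : M -> VS)
  (sigma : L -> M) (tT : VT -> R) (tS : VS -> R) (cmp : R -> R -> Prop)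
  (x y : L) : Prop :=
  x <> y /\ exists u w, is_lca2 T (lfT x) (lfT y) u /\
    is_lca2 S (lfS (sigma x)) (lfS (sigma y)) w /\ cmp (tT u) (tS w).

Definition simple_graph (L : finType) (G : rel L) : Prop :=
  (forall x, ~~ G x x) /\ (forall x y, G x y = G y x).

Definition graph3partition (L : finType) (Glt Geq Ggt : rel L) : Prop :=
  [/\ simple_graph Glt, simple_graph Geq, simple_graph Ggt &
      forall x y, x <> y ->
        [|| Glt x y && ~~ Geq x y && ~~ Ggt x y,
            ~~ Glt x y && Geq x y && ~~ Ggt x y
          | ~~ Glt x y && ~~ Geq x y && Ggt x y]].

Definition explained_by_relaxed_scenario (L M : finType) (Glt Geq Ggt : rel L)
  (sigma : L -> M) : Prop :=
  exists (VT VS : finType) (T : ptree VT) (lfT : L -> VT) (S : ptree VS)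
         (lfS : M -> VS) (mu : VT -> VS + VS) (tT : VT -> R) (tS : VS -> R),
    relaxed_scenario T lfT S lfS sigma mu tT tS /\
    (forall x y, Glt x y <-> scen_graph T lfT S lfS sigma tT tS Rlt x y) /\
    (forall x y, Geq x y <-> scen_graph T lfT S lfS sigma tT tS (@eq R) x y) /\
    (forall x y, Ggt x y <-> scen_graph T lfT S lfS sigma tT tS Rgt x y).

Definition properly_colored (L M : finType) (G : rel L) (sigma : L -> M) : Prop :=
  forall x y, G x y -> sigma x <> sigma y.

Definition cograph (L : finType) (G : rel L) : Prop :=
  forall a b c d : L, uniq [:: a; b; c; d] ->
    ~ (G a b /\ G b c /\ G c d /\ ~ G a c /\ ~ G b d /\ ~ G a d).

Definition displays (M V : finType) (T : ptree V) (lf : M -> V) (X Y Z : M) : Prop :=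
  exists u v, is_lca2 T (lf X) (lf Y) u /\ is_lca2 T (lf X) (lf Z) v /\
    is_lca2 T (lf Y) (lf Z) v /\ prec T u v.

(* a triple XY|Z is encoded by the ordered triple (X, Y, Z); sets of triples
   are predicates *)
Definition triples_consistent (M : finType) (Rs Fs : M -> M -> M -> Prop) : Prop :=
  exists (V : finType) (T : ptree V) (lf : M -> V),
    planted_phylo T /\ injective lf /\ (forall x, is_leaf T x <-> exists m, lf m = x) /\
    (forall X Y Z, Rs X Y Z -> displays T lf X Y Z) /\
    (forall X Y Z, Fs X Y Z -> ~ displays T lf X Y Z).

Definition distinct3 (M : finType) (X Y Z : M) : Prop :=
  X <> Y /\ X <> Z /\ Y <> Z.

Definition RS (L M : finType) (Glt Geq Ggt : rel L) (sigma : L -> M) (X Y Z : M) : Prop :=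
  exists x y z : L, sigma x = X /\ sigma y = Y /\ sigma z = Z /\ distinct3 X Y Z /\
    ((Glt x z /\ Glt y z /\ ~ Glt x y) \/ (Ggt x y /\ ~ Ggt x z /\ ~ Ggt y z)).

Definition FS (L M : finType) (Glt Geq Ggt : rel L) (sigma : L -> M) (A B C : M) : Prop :=
  exists x y z : L, distinct3 (sigma x) (sigma y) (sigma z) /\
    Geq x z /\ Geq y z /\ ~ Geq x y /\
    ((A, B, C) = (sigma x, sigma z, sigma y) \/ (A, B, C) = (sigma y, sigma z, sigma x)).

(* Necessity.  The times of last common ancestors in the gene tree and in the
   species tree are two ultrametrics on the leaves.  A gene leaf meets another
   leaf of its colour only above the species leaf, so G< and G= are properly
   coloured; a graph {u < v} built from two ultrametrics has no induced P4; and
   the tree of balls of the species ultrametric on the colours displays R_S and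
   no triple of F_S.

   Sufficiency.  Time a tree displaying R_S and avoiding F_S by numbers of
   descendants and let s be the induced ultrametric on L.  By recursion on the
   leaf set A one builds an ultrametric t with t < s, t = s, t > s exactly on
   G<, G=, G>.  If th is the time of the species root of A, the pairs that are
   not joined by a path of length at most two in G< + G= meet above th, pairs in
   different components of the "links" (G< + G= edges inside a child of the
   species root, G< edges across) meet at th, and linked pairs from different
   children meet below th: the cograph and triple conditions force all of them
   into G<.  Blocks of linked pairs inside one child are handled recursively.
   The gene tree is the tree of balls of t, and every gene vertex is mapped to
   the species vertex or edge at its time. *)

From mathcomp Require Import all_boot.
From mathcomp Require Import boolp.
From Stdlib Require Import Reals Lra.
Set Implicit Arguments. Unset Strict Implicit. Unset Printing Implicit Defensive.

Lemma exists_argmax (T : finType) (P : pred T) (f : T -> R) :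
  (exists a, P a) -> exists2 w, P w & forall z, P z -> (f z <= f w)%R.
Proof.
move=> [a Pa].
suff [w] : exists2 w, w \in enum P & forall z, z \in enum P -> (f z <= f w)%R.
  by rewrite mem_enum => Pw wmax; exists w => // z Pz; apply: wmax; rewrite mem_enum.
have : enum P != [::] by apply/eqP => eP; move: (mem_enum P a); rewrite eP in_nil unfold_in Pa.
elim: (enum P) => [//|b s IH] _.
have [->|/IH [w ws wmax]] := eqVneq s [::].
  by exists b => [|z]; rewrite ?mem_seq1 // => /eqP ->; lra.
have [le_bw|lt_wb] := Rle_lt_dec (f b) (f w).
  by exists w => [|z]; rewrite in_cons ?ws ?orbT // => /orP [/eqP ->|/wmax].
exists b => [|z]; rewrite in_cons ?eqxx // => /orP [/eqP ->|/wmax]; lra.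
Qed.
Arguments exists_argmax {T} P f.

Section PlantedTree.
Variables (V : finType) (T : ptree V).
Local Notation par := (ptpar T).
Local Notation p0 := (pt0 T).

Lemma iter_par_pt0 k : iter k par p0 = p0.
Proof. by elim: k => //= k ->; exact: ptpar0. Qed.

Lemma preceq_refl x : preceq T x x.
Proof. by exists 0. Qed.

Lemma preceq_trans x y z : preceq T x y -> preceq T y z -> preceq T x z.
Proof. by move=> [k <-] [j <-]; exists (j + k); rewrite iterD. Qed.

Lemma preceq_pt0 x : preceq T x p0.
Proof. exact: ptreach. Qed.

Lemma preceq_par x : preceq T x (par x).
Proof. by exists 1. Qed.

Lemma iter_par_cycle x k : iter k.+1 par x = x -> x = p0.
Proof.
move=> xk; have [n xn] := ptreach T x.
have iter_mul m : iter (m * k.+1) par x = x by elim: m => // m IH; rewrite mulSn iterD IH xk.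
by rewrite -(iter_mul n) -(subnK (leq_pmulr n (ltn0Sn k))) iterD xn iter_par_pt0.
Qed.

Lemma preceq_anti x y : preceq T x y -> preceq T y x -> x = y.
Proof.
move=> [[|k] xy] [j yx] //.
have : iter (j + k.+1) par x = x by rewrite iterD xy.
by rewrite addnS => /iter_par_cycle x0; move: xy; rewrite x0 iter_par_pt0.
Qed.

Lemma preceq_total y a b : preceq T y a -> preceq T y b -> preceq T a b \/ preceq T b a.
Proof.
move=> [k <-] [j <-]; have [kj|jk] := leqP k j.
  by left; exists (j - k); rewrite -iterD subnK.
by right; exists (k - j); rewrite -iterD subnK // ltnW.
Qed.

Lemma prec_par x : x <> p0 -> prec T x (par x).
Proof.
move=> x0; split=> [|e]; first exact: preceq_par.
by apply: x0; apply: (@iter_par_cycle x 0); rewrite /= -e.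
Qed.

Lemma leaf_preceq x y : is_leaf T x -> preceq T y x -> y = x.
Proof.
move=> [x0 xleaf] [[|k] yx] //; exfalso; apply: (xleaf (iter k par y)).
split; last by rewrite -iterS.
by move=> e; apply: x0; rewrite -yx iterS e ptpar0.
Qed.

Lemma pt0_not_leaf : ~ is_leaf T p0.
Proof. by case. Qed.

Lemma lca_exists a b : exists z, is_lca2 T a b z.
Proof.
have ex : exists k, `[< preceq T b (iter k par a) >].
  have [k ak] := ptreach T a; exists k; apply/asboolP; rewrite ak; exact: preceq_pt0.
case: (ex_minnP ex) => k /asboolP bk kmin.
exists (iter k par a); split; [by exists k | split=> // w [j <-] bj].
have kj : k <= j by apply: kmin; apply/asboolP.
by exists (j - k); rewrite -iterD subnK.
Qed.

Lemma lca_unique a b z z' : is_lca2 T a b z -> is_lca2 T a b z' -> z = z'.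
Proof. by move=> [az [bz zmin]] [az' [bz' zmin']]; apply: preceq_anti; auto. Qed.

Definition lca a b : V := sval (cid (lca_exists a b)).

Lemma lcaP a b : is_lca2 T a b (lca a b).
Proof. exact: svalP. Qed.

Lemma lcaE a b z : is_lca2 T a b z -> lca a b = z.
Proof. exact: lca_unique (lcaP a b). Qed.

Lemma preceq_lcal a b : preceq T a (lca a b).
Proof. by case: (lcaP a b). Qed.

Lemma preceq_lcar a b : preceq T b (lca a b).
Proof. by case: (lcaP a b) => _ []. Qed.

Lemma lca_least a b w : preceq T a w -> preceq T b w -> preceq T (lca a b) w.
Proof. by case: (lcaP a b) => _ [_]; apply. Qed.

Lemma lcaC a b : lca a b = lca b a.
Proof.
apply: lcaE; split; [exact: preceq_lcar | split; [exact: preceq_lcal | ]].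
by move=> w bw aw; exact: lca_least.
Qed.

Lemma lcaxx a : lca a a = a.
Proof. by apply: lcaE; split; [|split=> [|w]] => //; exact: preceq_refl. Qed.

Definition desc x : {set V} := [set y | `[< preceq T y x >]].

Lemma desc_proper x y : prec T x y -> desc x \proper desc y.
Proof.
move=> [xy /eqP yx]; apply/properP; split.
  by apply/subsetP => z; rewrite !inE => /asboolP zx; apply/asboolP; apply: preceq_trans xy.
exists y; rewrite !inE; first exact/asboolP/preceq_refl.
by apply/asboolP => yx'; move: yx; rewrite (preceq_anti xy yx') eqxx.
Qed.

Lemma card_desc_leaf x : is_leaf T x -> #|desc x| = 1.
Proof.
move=> xleaf; rewrite -(cards1 x); apply: eq_card => z; rewrite !inE.
by apply/asboolP/eqP => [/(leaf_preceq xleaf)|->]; last exact: preceq_refl.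
Qed.

Lemma exists_leaf_below x : x <> p0 -> exists2 l, is_leaf T l & preceq T l x.
Proof.
elim: {x}#|desc x| {-2}x (leqnn #|desc x|) => [|n IH] x.
  rewrite leqn0 => /eqP/cards0_eq desc0.
  have : x \in desc x by rewrite inE; apply/asboolP/preceq_refl.
  by rewrite desc0 inE.
move=> xn x0; have [xleaf|xinner] := pselect (is_leaf T x).
  by exists x => //; exact: preceq_refl.
have [c [c0 cx]] : exists c, is_child T c x.
  by apply: contrapT => nochild; apply: xinner; split=> // c xc; apply: nochild; exists c.
have cx' : prec T c x by rewrite -cx; exact: prec_par.
have [|l lleaf lc] := IH c _ c0; first exact: leq_trans (proper_card (desc_proper cx')) xn.
by exists l => //; apply: preceq_trans lc cx'.1.
Qed.

Lemma preceq_root : planted_phylo T ->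
  exists2 r, prec T r p0 & forall x, x <> p0 -> preceq T x r.
Proof.
move=> [[r [[r0 rp0] runiq]] _]; exists r => [|x x0]; first by rewrite -rp0; exact: prec_par.
have [k xk] := ptreach T x.
elim: k x x0 xk => [|k IH] x x0 xk //; rewrite iterSr in xk.
have [xp0|xp0] := pselect (par x = p0).
  by rewrite (runiq x (conj x0 xp0)); exact: preceq_refl.
exact: preceq_trans (preceq_par x) (IH _ xp0 xk).
Qed.

Section TimeMap.
Variable tau : V -> R.
Hypothesis tau_time : time_map T tau.

Lemma time_preceq x y : preceq T x y -> (tau x <= tau y)%R.
Proof.
move=> xy; have [->|neq] := pselect (x = y); first lra.
exact/Rlt_le/tau_time.
Qed.

Lemma time_comparable_inj x y :
  preceq T x y \/ preceq T y x -> tau x = tau y -> x = y.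
Proof.
move=> xy txy; apply: contrapT => neq.
case: xy => [xy|yx]; [have := tau_time (conj xy neq) | have := tau_time (conj yx (nesym neq))]; lra.
Qed.

Lemma time_lca_ultra a b c :
  (tau (lca a c) <= Rmax (tau (lca a b)) (tau (lca b c)))%R.
Proof.
have [ab_bc|bc_ab] := preceq_total (preceq_lcar a b) (preceq_lcal b c).
  have := Rmax_r (tau (lca a b)) (tau (lca b c)).
  have := time_preceq (lca_least (preceq_trans (preceq_lcal a b) ab_bc) (preceq_lcar b c)); lra.
have := Rmax_l (tau (lca a b)) (tau (lca b c)).
have := time_preceq (lca_least (preceq_lcal a b) (preceq_trans (preceq_lcar b c) bc_ab)); lra.
Qed.

Lemma time_leaf_lt_lca x y : is_leaf T x -> x <> y -> (tau x < tau (lca x y))%R.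
Proof.
move=> xleaf xy; apply: tau_time; split; first exact: preceq_lcal.
move=> e; apply: xy; apply/esym/(leaf_preceq xleaf).
by rewrite [X in preceq _ _ X]e; exact: preceq_lcar.
Qed.

Lemma time_lca_lt_pt0 a b : planted_phylo T -> a <> p0 -> b <> p0 ->
  (tau (lca a b) < tau p0)%R.
Proof.
move=> Tphylo a0 b0; have [r /tau_time rp0 below_r] := preceq_root Tphylo.
have := time_preceq (lca_least (below_r a a0) (below_r b b0)); lra.
Qed.

Lemma displaysE (M : finType) (lf : M -> V) X Y Z :
  displays T lf X Y Z <->
  (tau (lca (lf X) (lf Y)) < tau (lca (lf X) (lf Z)) /\
   tau (lca (lf X) (lf Z)) = tau (lca (lf Y) (lf Z)))%R.
Proof.
split=> [[u [v [/lcaE -> [/lcaE -> [/lcaE -> uv]]]]]|[lt_XY_XZ eq_XZ_YZ]].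
  by split=> //; apply: tau_time.
have XZ_YZ : lca (lf X) (lf Z) = lca (lf Y) (lf Z).
  by apply: time_comparable_inj eq_XZ_YZ; apply: (preceq_total (y := lf Z)); exact: preceq_lcar.
exists (lca (lf X) (lf Y)), (lca (lf X) (lf Z)).
do 2 (split; first exact: lcaP); split; first by rewrite XZ_YZ; exact: lcaP.
have [XY_XZ|XZ_XY] := preceq_total (preceq_lcal (lf X) (lf Y)) (preceq_lcal (lf X) (lf Z)).
  by split=> // e; move: lt_XY_XZ; rewrite e; lra.
have := time_preceq XZ_XY; lra.
Qed.

Lemma exists_edge_at_time m th : (tau m < th)%R -> (th < tau p0)%R ->
  exists w, [/\ preceq T m w, w <> p0, (tau w < th)%R & (th <= tau (par w))%R].
Proof.
move=> m_th th_p0.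
have [|w /andP [/asboolP mw /asboolP w_th] wmax] :=
  exists_argmax (fun w => `[< preceq T m w >] && `[< (tau w < th)%R >]) tau.
  by exists m; apply/andP; split; apply/asboolP => //; exact: preceq_refl.
have w0 : w <> p0 by move=> e; move: w_th; rewrite e; lra.
exists w; split=> //; apply: Rnot_lt_le => par_w_th.
have /wmax : `[< preceq T m (par w) >] && `[< (tau (par w) < th)%R >].
  by apply/andP; split; apply/asboolP => //; exact: preceq_trans mw (preceq_par w).
have := tau_time (prec_par w0); lra.
Qed.

End TimeMap.

Lemma card_desc_time : time_map T (fun v => INR #|desc v|).
Proof. by move=> x y /desc_proper/proper_card/ltP; apply: lt_INR. Qed.

End PlantedTree.

Definition labelled_phylo (X V : finType) (T : ptree V) (lf : X -> V) : Prop :=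
  [/\ planted_phylo T, injective lf & forall v, is_leaf T v <-> exists x, lf x = v].

Section UltrametricTree.
Variables (X : finType) (x0 : X) (d : X -> X -> R) (top : R).
Hypothesis d_sym : forall x y, d x y = d y x.
Hypothesis d_ultra : forall x y z, (d x z <= Rmax (d x y) (d y z))%R.
Hypothesis d_diag_lt : forall x y, x <> y -> (d x x < d x y)%R.
Hypothesis d_lt_top : forall x y, (d x y < top)%R.

Definition ball x r : {set X} := [set z | `[< (d x z <= r)%R >]].

Lemma in_ball x r z : (z \in ball x r) = `[< (d x z <= r)%R >].
Proof. by rewrite inE. Qed.

Lemma ball_recenter x y r : (d x y <= r)%R -> ball y r = ball x r.
Proof.
move=> xy; apply/setP => z; rewrite !in_ball; apply/asboolP/asboolP => dz.
  by have := d_ultra x y z; have := Rmax_lub _ _ _ xy dz; lra.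
by have := d_ultra y x z; rewrite (d_sym y x); have := Rmax_lub _ _ _ xy dz; lra.
Qed.

Lemma mem_ball_center x y : x \in ball x (d x y).
Proof.
rewrite in_ball; apply/asboolP; have [->|/d_diag_lt] := pselect (x = y); lra.
Qed.

Lemma mem_ball_boundary x y : y \in ball x (d x y).
Proof. by rewrite in_ball; apply/asboolP; lra. Qed.

Definition is_ball (A : {set X}) : bool := [exists x, exists y, A == ball x (d x y)].

Lemma is_ballP A : reflect (exists x y, A = ball x (d x y)) (is_ball A).
Proof.
apply: (iffP existsP) => [[x /existsP [y /eqP ->]]|[x [y ->]]]; first by exists x, y.
by exists x; apply/existsP; exists y.
Qed.

Lemma is_ball1 x : is_ball [set x].
Proof.
apply/is_ballP; exists x, x; apply/setP => z; rewrite inE in_ball.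
apply/eqP/asboolP => [->|dz]; first lra.
by apply: contrapT => /nesym/d_diag_lt; lra.
Qed.

Lemma is_ballT : is_ball setT.
Proof.
have [y _ ymax] := exists_argmax predT (d x0) (ex_intro _ x0 isT).
apply/is_ballP; exists x0, y; apply/setP => z.
by rewrite inE in_ball; apply/esym/asboolP/ymax.
Qed.

Definition diam (A : {set X}) : R :=
  if [pick p in setX A A | [forall q in setX A A, `[< (d q.1 q.2 <= d p.1 p.2)%R >]]]
  is Some p then d p.1 p.2 else 0%R.

Lemma diam_ball x y : diam (ball x (d x y)) = d x y.
Proof.
rewrite /diam; case: pickP => [[z w] /= /andP [zw /forall_inP zw_max]|no_max].
  apply: Rle_antisym; last first.
    by apply/asboolP/(zw_max (x, y)); rewrite in_setX mem_ball_center mem_ball_boundary.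
  move: zw; rewrite in_setX !in_ball => /andP [/asboolP xz /asboolP xw].
  by have := d_ultra z x w; rewrite (d_sym z x); have := Rmax_lub _ _ _ xz xw; lra.
exfalso; set A := ball x (d x y) in no_max.
have [|p pA p_max] := exists_argmax (fun p => p \in setX A A) (fun p => d p.1 p.2).
  by exists (x, y); rewrite in_setX mem_ball_center mem_ball_boundary.
move: (no_max p); rewrite /= pA => /negP; apply; apply/forall_inP => q qA.
exact/asboolP/p_max.
Qed.

Lemma is_ballE A a : is_ball A -> a \in A -> A = ball a (diam A).
Proof.
move=> /is_ballP [x [y ->]]; rewrite diam_ball in_ball => /asboolP xa.
by rewrite (ball_recenter xa).
Qed.

Lemma ball_nested A B a : is_ball A -> is_ball B -> a \in A -> a \in B ->
  A \subset B \/ B \subset A.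
Proof.
move=> Aball Bball aA aB; rewrite (is_ballE Aball aA) (is_ballE Bball aB).
have [AB|BA] := Rle_lt_dec (diam A) (diam B); [left|right]; apply/subsetP => z;
  rewrite !in_ball => /asboolP az; apply/asboolP; lra.
Qed.

Lemma ball_nonempty A : is_ball A -> exists a, a \in A.
Proof. by move=> /is_ballP [x [y ->]]; exists x; exact: mem_ball_center. Qed.

Lemma diam_proper A B : is_ball A -> is_ball B -> A \proper B -> (diam A < diam B)%R.
Proof.
move=> Aball Bball /properP [/subsetP AB [z zB zA]].
have [a aA] := ball_nonempty Aball.
move: zA zB; rewrite {1}(is_ballE Aball aA) {1}(is_ballE Bball (AB a aA)) !in_ball.
by move=> /asboolPn za /asboolP zb; lra.
Qed.

Lemma diam_lt_top A : is_ball A -> (diam A < top)%R.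
Proof. by move=> /is_ballP [x [y ->]]; rewrite diam_ball. Qed.

(* The tree of [d]: its balls ordered by inclusion, below a planted vertex [None]. *)
Definition cluster := {A : {set X} | is_ball A}.

Definition cluster_top : cluster := exist _ setT is_ballT.

Definition cluster_par (A : cluster) : cluster :=
  [arg min_(B < cluster_top | val A \proper val B) #|val B|].

Definition tree_par (v : option cluster) : option cluster :=
  if v is Some A then (if val A == setT then None else Some (cluster_par A)) else None.

Lemma cluster_nonempty (A : cluster) : exists a, a \in val A.
Proof. exact: ball_nonempty (svalP A). Qed.

Lemma cluster_parP (A : cluster) : val A != setT ->
  val A \proper val (cluster_par A) /\
  forall B : cluster, val A \proper val B -> val (cluster_par A) \subset val B.
Proof.
move=> AT; rewrite /cluster_par; case: arg_minnP => [|P AP Pmin]; first by rewrite properT.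
split=> // B AB; have [a aA] := cluster_nonempty A.
have sub_a (C : cluster) : val A \proper val C -> a \in val C by move/proper_sub/subsetP; apply.
have [//|BP] := ball_nested (svalP P) (svalP B) (sub_a _ AP) (sub_a _ AB).
by have /eqP -> : val B == val P by rewrite eqEcard BP Pmin.
Qed.

Lemma tree_par_proper (A C : cluster) : tree_par (Some C) = Some A -> val C \proper val A.
Proof. by rewrite /=; case: ifP => // /negbT CT [<-]; case: (cluster_parP CT). Qed.

Lemma iter_tree_par_subset (A B : cluster) :
  val A \subset val B -> exists k, iter k tree_par (Some A) = Some B.
Proof.
elim: {A}#|~: val A| {-2}A (leqnn #|~: val A|) => [|n IH] A.
  rewrite leqn0 cards_eq0 => /eqP AC0.
  have AT : val A = setT by rewrite -[val A]setCK AC0 setC0.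
  rewrite AT subTset => /eqP BT.
  by exists 0; congr Some; apply: val_inj; rewrite /= AT BT.
move=> An AB; have [AeqB|AneB] := eqVneq (val A) (val B).
  by exists 0; congr Some; apply: val_inj.
have AB' : val A \proper val B by rewrite properEneq AneB.
have AT : val A != setT by rewrite -properT; exact: proper_sub_trans AB' (subsetT _).
have [Apar Apar_min] := cluster_parP AT.
have [|k park] := IH (cluster_par A) _ (Apar_min B AB').
  by rewrite -ltnS; apply: leq_trans An; apply: proper_card; rewrite properC.
by exists k.+1; rewrite iterSr /= (negbTE AT).
Qed.

Lemma tree_reach v : exists k, iter k tree_par v = None.
Proof.
case: v => [A|]; last by exists 0.
have [k Ak] := @iter_tree_par_subset A cluster_top (subsetT _).
by exists k.+1; rewrite iterS Ak /= eqxx.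
Qed.

Definition cluster_tree : ptree (option cluster) := @PTree _ None tree_par erefl tree_reach.

Lemma iter_tree_par_None k : iter k tree_par None = None.
Proof. by elim: k => //= k ->. Qed.

Lemma preceq_clusterE (A B : cluster) :
  preceq cluster_tree (Some A) (Some B) <-> val A \subset val B.
Proof.
split=> [[k]|/iter_tree_par_subset //].
elim: k B => [|k IH] B /=; first by move=> [->].
case Ak: (iter k tree_par (Some A)) => [C|] //= /tree_par_proper /proper_sub.
exact: subset_trans (IH C Ak).
Qed.

Definition cluster_time (v : option cluster) : R :=
  if v is Some A then diam (val A) else top.

Lemma cluster_time_map : time_map cluster_tree cluster_time.
Proof.
move=> [A|] [B|] [[k AB] neqAB] /=.
- have AsubB : val A \subset val B by apply/preceq_clusterE; exists k.
  apply: diam_proper (svalP A) (svalP B) _; rewrite properEneq AsubB andbT.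
  by apply/eqP => /val_inj eqAB; apply: neqAB; rewrite eqAB.
- exact: diam_lt_top (svalP A).
- by move: AB; rewrite iter_tree_par_None.
- by case: neqAB.
Qed.

Definition leaf_of (x : X) : option cluster := Some (exist _ [set x] (is_ball1 x)).

Lemma leaf_of_inj : injective leaf_of.
Proof. by move=> x y [/setP /(_ x)]; rewrite !inE eqxx => /esym /eqP. Qed.

Lemma exists_child_cluster (A : cluster) b : b \in val A -> val A != [set b] ->
  exists2 C : cluster, b \in val C & tree_par (Some C) = Some A.
Proof.
move=> bA Ab.
pose P : pred cluster := fun C => (b \in val C) && (val C \proper val A).
have Pb : P (exist _ [set b] (is_ball1 b)).
  by rewrite /P /= set11 properEneq eq_sym Ab sub1set.
case: (@arg_maxnP _ _ P (fun C => #|val C|) Pb) => C /andP [bC CA] Cmax.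
exists C => //; have CT : val C != setT.
  by rewrite -properT; exact: proper_sub_trans CA (subsetT _).
rewrite /= (negbTE CT); congr Some; apply: val_inj.
have [Cpar Cpar_min] := cluster_parP CT.
apply/eqP; rewrite eqEsubset Cpar_min //=; apply: contraT => parA.
have /Cmax : P (cluster_par C).
  rewrite /P properEneq Cpar_min // andbT (subsetP (proper_sub Cpar)) //=.
  by apply: contraNneq parA => ->.
by move=> /= le_par; move: (proper_card Cpar); rewrite ltnNge le_par.
Qed.

Lemma is_leaf_clusterE (A : cluster) :
  is_leaf cluster_tree (Some A) <-> exists x, val A = [set x].
Proof.
split=> [[_ Aleaf]|[x Ax]].
  have [a aA] := cluster_nonempty A; exists a; apply/eqP; apply: contraT => Aa.
  by have [C _ CA] := exists_child_cluster aA Aa; case: (Aleaf (Some C)).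
split=> // [[C|]] [] // _ /tree_par_proper; rewrite Ax => /properP [/subsetP CA [z zx zC]].
have [c cC] := cluster_nonempty C.
by move: (CA c cC) zx; rewrite !inE => /eqP <- /eqP zc; rewrite zc cC in zC.
Qed.

Lemma cluster_tree_leaves v : is_leaf cluster_tree v <-> exists x, leaf_of x = v.
Proof.
case: v => [A|]; last by split=> [[]|[]].
rewrite is_leaf_clusterE; split=> [[x Ax]|[x [<-]]]; last by exists x.
by exists x; congr Some; apply: val_inj.
Qed.

Lemma cluster_tree_phylo : planted_phylo cluster_tree.
Proof.
split.
  exists (Some cluster_top); split; first by split=> //=; rewrite eqxx.
  by move=> [C|] [] //= _; case: ifP => // /eqP CT _; congr Some; apply: val_inj.
move=> [A|] // _ Ainner.
have [[C|] [_ CA]] : exists c, is_child cluster_tree c (Some A); last by [].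
  apply: contrapT => nochild; apply: Ainner; split=> // c Ac; apply: nochild; by exists c.
have /properP [/subsetP CsubA [b bA bC]] := tree_par_proper CA.
have [c cC] := cluster_nonempty C.
have Ab : val A != [set b].
  by apply: contraNneq bC => Ab; move: (CsubA c cC); rewrite Ab inE => /eqP <-.
have [C' bC' C'A] := exists_child_cluster bA Ab.
exists (Some C), (Some C'); split; last by split; split.
by move=> [CC']; rewrite CC' bC' in bC.
Qed.

Lemma cluster_time_lca x y : cluster_time (lca cluster_tree (leaf_of x) (leaf_of y)) = d x y.
Proof.
have ball_xy : is_ball (ball x (d x y)) by apply/is_ballP; exists x, y.
suff -> : lca cluster_tree (leaf_of x) (leaf_of y) = Some (exist _ (ball x (d x y)) ball_xy).
  exact: diam_ball.
apply: lcaE; rewrite /leaf_of; split; [|split].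
- by apply/preceq_clusterE; rewrite /= sub1set mem_ball_center.
- by apply/preceq_clusterE; rewrite /= sub1set mem_ball_boundary.
move=> [B|] xB yB; last exact: preceq_pt0.
move/preceq_clusterE: xB; move/preceq_clusterE: yB; rewrite /= !sub1set => yB xB.
apply/preceq_clusterE; move: yB => /=.
rewrite (is_ballE (svalP B) xB) in_ball => /asboolP xy; apply/subsetP => z.
by rewrite !in_ball => /asboolP xz; apply/asboolP; lra.
Qed.

End UltrametricTree.

Lemma ultrametric_tree (X : finType) (x0 : X) (d : X -> X -> R) (top : R) :
  (forall x y, d x y = d y x) ->
  (forall x y z, (d x z <= Rmax (d x y) (d y z))%R) ->
  (forall x y, x <> y -> (d x x < d x y)%R) ->
  (forall x y, (d x y < top)%R) ->
  exists (V : finType) (T : ptree V) (lf : X -> V) (tau : V -> R),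
    [/\ labelled_phylo T lf, time_map T tau, tau (pt0 T) = top &
        forall x y, tau (lca T (lf x) (lf y)) = d x y].
Proof.
move=> d_sym d_ultra d_diag_lt d_lt_top.
exists _, (cluster_tree x0 d_sym d_ultra d_diag_lt), (leaf_of d_diag_lt), (@cluster_time _ d top).
split=> //; last exact: cluster_time_lca; last exact: cluster_time_map.
split; [exact: cluster_tree_phylo | exact: leaf_of_inj | exact: cluster_tree_leaves].
Qed.

Section Reconciliation.
Variables (L M VT VS : finType) (T : ptree VT) (lfT : L -> VT) (S : ptree VS) (lfS : M -> VS).
Variables (sigma : L -> M) (tT : VT -> R) (tS : VS -> R).
Hypothesis T_labelled : labelled_phylo T lfT.
Hypothesis S_phylo : planted_phylo S.
Hypothesis lfS_inj : injective lfS.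
Hypothesis lfS_leaf : forall m, is_leaf S (lfS m).
Hypothesis tT_time : time_map T tT.
Hypothesis tS_time : time_map S tS.
Hypothesis time_pt0 : tT (pt0 T) = tS (pt0 S).
Hypothesis time_leaf : forall x, tT (lfT x) = tS (lfS (sigma x)).

Definition valid_image (v : VT) (m : VS + VS) : Prop :=
  [/\ forall w, m = inr w -> [/\ w <> pt0 S, (tS w < tT v)%R & (tT v < tS (ptpar S w))%R],
      forall w, m = inl w -> tS w = tT v,
      m = inl (pt0 S) <-> v = pt0 T,
      (exists w, m = inl w /\ is_leaf S w) <-> is_leaf T v &
      forall x, lfT x = v -> m = inl (lfS (sigma x))].

Lemma valid_image_pt0 : valid_image (pt0 T) (inl (pt0 S)).
Proof.
have [_ _ T_leaves] := T_labelled.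
split=> //.
- by move=> w [<-].
- by split=> [[w [[<-] /pt0_not_leaf]]|/pt0_not_leaf].
- by move=> x lfx; have /pt0_not_leaf := (T_leaves _).2 (ex_intro _ x lfx).
Qed.

Lemma valid_image_leaf x : valid_image (lfT x) (inl (lfS (sigma x))).
Proof.
have [_ lfT_inj T_leaves] := T_labelled.
have lfx_leaf : is_leaf T (lfT x) by apply/T_leaves; exists x.
split=> //.
- by move=> w [<-]; rewrite time_leaf.
- by split=> [[] lf0|lf0]; [case: (lfS_leaf (sigma x)) => /(_ lf0) | case: lfx_leaf => /(_ lf0)].
- by split=> // _; exists (lfS (sigma x)).
- by move=> y /lfT_inj ->.
Qed.

Lemma exists_valid_image_inner v : v <> pt0 T -> ~ is_leaf T v -> exists m, valid_image v m.
Proof.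
have [_ _ T_leaves] := T_labelled.
move=> v0 vinner; have [l lleaf lv] := exists_leaf_below v0.
have [x lfx] := (T_leaves l).1 lleaf; subst l.
have not_lf y : lfT y <> v by move=> lfy; apply: vinner; apply/T_leaves; exists y.
have low : (tS (lfS (sigma x)) < tT v)%R.
  by rewrite -time_leaf; apply: tT_time; split=> //; exact: not_lf.
have high : (tT v < tS (pt0 S))%R.
  by rewrite -time_pt0; apply: tT_time; split; [exact: preceq_pt0 | exact: v0].
have [w [_ w0 w_v v_par]] := exists_edge_at_time tS_time low high.
have [par_v|par_v] := Req_dec (tS (ptpar S w)) (tT v).
  exists (inl (ptpar S w)); split=> //.
  - by move=> u [<-].
  - split=> [[par0]|e]; last by case: (v0 e).
    by move: high; rewrite -par_v -par0; lra.
  - by split=> [[u [[<-] [_ /(_ w) []]]]|/vinner].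
  - by move=> y /not_lf.
exists (inr w); split=> //.
- by move=> u [<-]; split=> //; lra.
- by split=> [[u []]|/vinner].
- by move=> y /not_lf.
Qed.

Lemma relaxed_scenario_of_times : exists mu, relaxed_scenario T lfT S lfS sigma mu tT tS.
Proof.
have [T_phylo lfT_inj T_leaves] := T_labelled.
have image v : exists m, valid_image v m.
  have [->|v0] := pselect (v = pt0 T); first by exists (inl (pt0 S)); exact: valid_image_pt0.
  have [/T_leaves [x <-]|vinner] := pselect (is_leaf T v); last exact: exists_valid_image_inner.
  by exists (inl (lfS (sigma x))); exact: valid_image_leaf.
pose mu v := sval (cid (image v)).
have muP v : valid_image v (mu v) by exact: svalP (cid (image v)).
exists mu; do 6 (split=> //).
split; first by move=> v w mu_w; case: (muP v) => /(_ w mu_w) [].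
split; first by move=> v; case: (muP v).
split; first by move=> v; case: (muP v).
split; first by move=> x; case: (muP (lfT x)) => _ _ _ _; apply.
split; first by move=> v w; case: (muP v) => _ + _ _ _; apply.
by move=> v w mu_w; case: (muP v) => /(_ w mu_w) [].
Qed.

End Reconciliation.

Lemma Rmax_le_lt a b c : (a <= Rmax b c)%R -> (b < a)%R -> (a <= c)%R.
Proof. by rewrite /Rmax; case: Rle_dec; lra. Qed.

Section Ultrametric.
Variables (X : Type) (v : X -> X -> R).
Hypothesis v_sym : forall x y, v x y = v y x.
Hypothesis v_ultra : forall x y z, (v x z <= Rmax (v x y) (v y z))%R.

Lemma ultra_isosceles a b c :
  (v a c < Rmax (v a b) (v b c))%R -> v a b = v b c /\ (v a c < v a b)%R.
Proof.
have := v_ultra b a c; have := v_ultra a c b; rewrite (v_sym b a) (v_sym c b).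
by rewrite /Rmax; do 3 case: Rle_dec; lra.
Qed.

Lemma ultra_isosceles_lt a b c : (v a b < v a c)%R -> v a c = v c b.
Proof.
move=> ab_ac; have := Rmax_le_lt (v_ultra a b c) ab_ac.
have := v_ultra b a c; rewrite (v_sym b a) (v_sym c b) /Rmax; case: Rle_dec; lra.
Qed.

End Ultrametric.

Lemma cograph_ultra_lt (X : finType) (u v : X -> X -> R) (G : rel X) :
  (forall x y, u x y = u y x) -> (forall x y z, (u x z <= Rmax (u x y) (u y z))%R) ->
  (forall x y, v x y = v y x) -> (forall x y z, (v x z <= Rmax (v x y) (v y z))%R) ->
  (forall x y, G x y <-> x <> y /\ (u x y < v x y)%R) -> cograph G.
Proof.
move=> u_sym u_ultra v_sym v_ultra G_lt a b c d.
rewrite /= !inE !negb_or => /and4P [/and3P [_ /eqP ac /eqP ad] /andP [_ /eqP bd] _ _].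
move=> [/G_lt [_ ab_lt] [/G_lt [_ bc_lt] [/G_lt [_ cd_lt] [ac_ge [bd_ge ad_ge]]]]].
have v_le_u x y : x <> y -> ~ G x y -> (v x y <= u x y)%R.
  by move=> xy nG; apply: Rnot_lt_le => lt; apply: nG; apply/G_lt.
have [vab_bc vac_ab] : v a b = v b c /\ (v a c < v a b)%R.
  apply: ultra_isosceles => //; apply: Rle_lt_trans (v_le_u _ _ ac ac_ge) _.
  apply: Rle_lt_trans (u_ultra a b c) _; rewrite /Rmax; do 2 case: Rle_dec; lra.
have [vbc_cd vbd_bc] : v b c = v c d /\ (v b d < v b c)%R.
  apply: ultra_isosceles => //; apply: Rle_lt_trans (v_le_u _ _ bd bd_ge) _.
  apply: Rle_lt_trans (u_ultra b c d) _; rewrite /Rmax; do 2 case: Rle_dec; lra.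
have vac_cd : (v a c < v c d)%R by lra.
have := v_ultra c a d; rewrite (v_sym c a) => /Rmax_le_lt /(_ vac_cd) vcd_ad.
have := v_le_u _ _ ad ad_ge; have := u_ultra a b d; have := u_ultra b c d.
rewrite /Rmax; do 2 case: Rle_dec; lra.
Qed.

Lemma nested_ultra (X : Type) (D : pred X) (E : rel X) (u : X -> X -> R) (c : R) :
  (forall x y z, D x -> D y -> D z -> E x y -> E y z -> E x z) ->
  (forall x y z, D x -> D y -> D z -> E x y -> E y z -> E x z ->
     (u x z <= Rmax (u x y) (u y z))%R) ->
  (forall x y, D x -> D y -> E x y -> (u x y <= c)%R) ->
  forall x y z, D x -> D y -> D z ->
  ((if E x z then u x z else c) <=
     Rmax (if E x y then u x y else c) (if E y z then u y z else c))%R.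
Proof.
move=> E_trans u_ultra u_le_c x y z xD yD zD.
case xz: (E x z); case xy: (E x y); case yz: (E y z).
- exact: u_ultra.
- exact: Rle_trans (u_le_c _ _ xD zD xz) (Rmax_r _ _).
- exact: Rle_trans (u_le_c _ _ xD zD xz) (Rmax_l _ _).
- exact: Rle_trans (u_le_c _ _ xD zD xz) (Rmax_l _ _).
- by rewrite (E_trans _ _ _ xD yD zD xy yz) in xz.
- exact: Rmax_r.
- exact: Rmax_l.
- exact: Rmax_l.
Qed.

Lemma ultra_agree_third (X : Type) (t s : X -> X -> R) x y z :
  (forall x y, t x y = t y x) -> (forall x y z, (t x z <= Rmax (t x y) (t y z))%R) ->
  (forall x y, s x y = s y x) ->
  t x z = s x z -> t y z = s y z -> (s x z < s x y)%R -> s x y = s z y -> t x y = s x y.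
Proof.
move=> t_sym t_ultra s_sym txz tyz xz_xy xy_zy.
have zx_zy : (t z x < t z y)%R by rewrite (t_sym z x) (t_sym z y) txz tyz (s_sym y z) -xy_zy.
by rewrite (t_sym x y) -(ultra_isosceles_lt t_sym t_ultra zx_zy) (t_sym z y) tyz s_sym xy_zy.
Qed.

Lemma scen_graphE (L M VT VS : finType) (T : ptree VT) (lfT : L -> VT) (S : ptree VS)
    (lfS : M -> VS) (sigma : L -> M) (tT : VT -> R) (tS : VS -> R) (cmp : R -> R -> Prop) x y :
  scen_graph T lfT S lfS sigma tT tS cmp x y <->
  x <> y /\ cmp (tT (lca T (lfT x) (lfT y))) (tS (lca S (lfS (sigma x)) (lfS (sigma y)))).
Proof.
split=> [[xy [u [w [/lcaE -> [/lcaE -> //]]]]]|[xy cmp_xy]].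
by split=> //; do 2 eexists; split; [exact: lcaP | split; [exact: lcaP | exact: cmp_xy]].
Qed.

Section Necessity.
Variables (L M VT VS : finType) (Glt Geq Ggt : rel L) (sigma : L -> M).
Variables (T : ptree VT) (lfT : L -> VT) (S : ptree VS) (lfS : M -> VS).
Variables (mu : VT -> VS + VS) (tT : VT -> R) (tS : VS -> R) (l0 : L).
Hypothesis scenario : relaxed_scenario T lfT S lfS sigma mu tT tS.
Hypothesis Glt_scen : forall x y, Glt x y <-> scen_graph T lfT S lfS sigma tT tS Rlt x y.
Hypothesis Geq_scen : forall x y, Geq x y <-> scen_graph T lfT S lfS sigma tT tS eq x y.
Hypothesis Ggt_scen : forall x y, Ggt x y <-> scen_graph T lfT S lfS sigma tT tS Rgt x y.

Let gene x y := tT (lca T (lfT x) (lfT y)).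
Let species X Y := tS (lca S (lfS X) (lfS Y)).

Let tT_time : time_map T tT. Proof. by case: scenario => [_ [_ [_ [_ []]]]]. Qed.
Let tS_time : time_map S tS. Proof. by case: scenario => [_ [_ [_ [_ [_ []]]]]]. Qed.
Let lfT_inj : injective lfT. Proof. by case: scenario => [_ [_ [[]]]]. Qed.
Let lfS_inj : injective lfS. Proof. by case: scenario => [_ [_ [_ [[]]]]]. Qed.
Let lfS_leaf X : is_leaf S (lfS X). Proof. by case: scenario => [_ [_ [_ [[_ leaves] _]]]]. Qed.

Let lfT_leaf x : is_leaf T (lfT x).
Proof. by case: scenario => [_ [_ [[_ leaves] _]]]; apply/leaves; exists x. Qed.

Let time_leaf x : tT (lfT x) = tS (lfS (sigma x)).
Proof.
case: scenario => [_ [_ [_ [_ [_ [_ [_ [_ [_ [mu_lf [S2 _]]]]]]]]]]].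
by rewrite (S2 _ _ (mu_lf x)).
Qed.

Let gene_sym x y : gene x y = gene y x. Proof. by rewrite /gene lcaC. Qed.
Let species_sym X Y : species X Y = species Y X. Proof. by rewrite /species lcaC. Qed.
Let gene_ultra x y z : (gene x z <= Rmax (gene x y) (gene y z))%R.
Proof. exact: time_lca_ultra. Qed.
Let species_ultra X Y Z : (species X Z <= Rmax (species X Y) (species Y Z))%R.
Proof. exact: time_lca_ultra. Qed.

Let Glt_lt x y : Glt x y <-> x <> y /\ (gene x y < species (sigma x) (sigma y))%R.
Proof. by rewrite Glt_scen scen_graphE. Qed.
Let Geq_eq x y : Geq x y <-> x <> y /\ gene x y = species (sigma x) (sigma y).
Proof. by rewrite Geq_scen scen_graphE. Qed.
Let Ggt_gt x y : Ggt x y <-> x <> y /\ (species (sigma x) (sigma y) < gene x y)%R.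
Proof. by rewrite Ggt_scen scen_graphE. Qed.

Lemma species_lt_gene_same_color x y :
  x <> y -> sigma x = sigma y -> (species (sigma x) (sigma y) < gene x y)%R.
Proof.
move=> xy <-; rewrite /species lcaxx -time_leaf.
by apply: (time_leaf_lt_lca tT_time (lfT_leaf x)) => /lfT_inj.
Qed.

Lemma explained_properly_colored : properly_colored Glt sigma /\ properly_colored Geq sigma.
Proof.
split=> x y.
  by move=> /Glt_lt [xy lt] sxy; have := species_lt_gene_same_color xy sxy; lra.
by move=> /Geq_eq [xy eq] sxy; have := species_lt_gene_same_color xy sxy; lra.
Qed.

Lemma explained_cographs : cograph Glt /\ cograph Ggt.
Proof.
have ssym x y : species (sigma x) (sigma y) = species (sigma y) (sigma x) by [].
have sultra x y z : (species (sigma x) (sigma z) <=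
    Rmax (species (sigma x) (sigma y)) (species (sigma y) (sigma z)))%R by [].
split; first exact: (cograph_ultra_lt gene_sym gene_ultra ssym sultra Glt_lt).
exact: (cograph_ultra_lt ssym sultra gene_sym gene_ultra Ggt_gt).
Qed.

Lemma RS_species_lt X Y Z : RS Glt Geq Ggt sigma X Y Z ->
  exists x y z, [/\ sigma x = X, sigma y = Y, sigma z = Z &
    (species X Y < Rmax (species X Z) (species Z Y))%R].
Proof.
move=> [x [y [z [<- [<- [<- [[XY [XZ YZ]] cases]]]]]]]; exists x, y, z; split=> //.
have neq u v : sigma u <> sigma v -> u <> v by move=> uv e; apply: uv; rewrite e.
have := gene_ultra x z y.
case: cases => [[/Glt_lt [_ lt_xz] [/Glt_lt [_ lt_yz] not_xy]]|[/Ggt_gt [_ gt_xy] [ngt_xz ngt_yz]]].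
  have le_xy : (species (sigma x) (sigma y) <= gene x y)%R.
    by apply: Rnot_lt_le => lt; apply: not_xy; apply/Glt_lt; split=> //; exact: neq.
  rewrite (species_sym (sigma z)) (gene_sym z y) /Rmax; do 2 case: Rle_dec; lra.
have le u v : sigma u <> sigma v -> ~ Ggt u v -> (gene u v <= species (sigma u) (sigma v))%R.
  by move=> uv ngt; apply: Rnot_lt_le => lt; apply: ngt; apply/Ggt_gt; split=> //; exact: neq.
have := le _ _ XZ ngt_xz; have := le _ _ YZ ngt_yz.
rewrite (species_sym (sigma z)) (gene_sym z y) /Rmax; do 2 case: Rle_dec; lra.
Qed.

Lemma explained_triples_consistent :
  triples_consistent (RS Glt Geq Ggt sigma) (FS Glt Geq Ggt sigma).
Proof.
have species_diag X Y : X <> Y -> (species X X < species X Y)%R.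
  by move=> XY; rewrite /species lcaxx; apply: time_leaf_lt_lca => // /lfS_inj.
have species_top X Y : (species X Y < tS (pt0 S) + 1)%R.
  by have := time_preceq tS_time (preceq_pt0 S (lca S (lfS X) (lfS Y))); rewrite /species; lra.
have [V [U [lf [tau [[U_phylo lf_inj U_leaves] tau_time _ tau_lca]]]]] :=
  ultrametric_tree (sigma l0) species_sym species_ultra species_diag species_top.
exists V, U, lf; do 3 (split=> //); split.
  move=> X Y Z /RS_species_lt [x [y [z [<- <- <- lt]]]].
  apply/(displaysE tau_time); rewrite !tau_lca.
  have [eq_xz_zy lt_xy_xz] := ultra_isosceles species_sym species_ultra lt.
  by split=> //; rewrite eq_xz_zy species_sym.
move=> A B C [x [y [z [[sxy _] [/Geq_eq [_ eq_xz] [/Geq_eq [_ eq_yz] [not_xy cases]]]]]]].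
move/(displaysE tau_time); rewrite !tau_lca.
have ssym u v : species (sigma u) (sigma v) = species (sigma v) (sigma u) by [].
have neq_xy : gene x y <> species (sigma x) (sigma y).
  by move=> eq_xy; apply: not_xy; apply/Geq_eq; split=> // exy; apply: sxy; rewrite exy.
case: cases => [[-> -> ->]|[-> -> ->]] [lt eq]; apply: neq_xy.
  exact: (ultra_agree_third gene_sym gene_ultra ssym eq_xz eq_yz lt eq).
rewrite gene_sym species_sym.
exact: (ultra_agree_third gene_sym gene_ultra ssym eq_yz eq_xz lt eq).
Qed.

End Necessity.

Section GraphPartition.
Variables (L : finType) (Glt Geq Ggt : rel L).
Hypothesis partition : graph3partition Glt Geq Ggt.

Definition Gle x y := Glt x y || Geq x y.

Lemma Glt_irr x : Glt x x = false. Proof. by case: partition => [[/(_ x)/negbTE]]. Qed.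
Lemma Geq_irr x : Geq x x = false. Proof. by case: partition => [_ [/(_ x)/negbTE]]. Qed.
Lemma Ggt_irr x : Ggt x x = false. Proof. by case: partition => [_ _ [/(_ x)/negbTE]]. Qed.
Lemma GltC x y : Glt x y = Glt y x. Proof. by case: partition => [[_ ->]]. Qed.
Lemma GeqC x y : Geq x y = Geq y x. Proof. by case: partition => [_ [_ ->]]. Qed.
Lemma GgtC x y : Ggt x y = Ggt y x. Proof. by case: partition => [_ _ [_ ->]]. Qed.
Lemma GleC x y : Gle x y = Gle y x. Proof. by rewrite /Gle GltC GeqC. Qed.
Lemma Gle_irr x : Gle x x = false. Proof. by rewrite /Gle Glt_irr Geq_irr. Qed.

Lemma partitionP x y : x <> y ->
  [\/ [/\ Glt x y, ~~ Geq x y & ~~ Ggt x y], [/\ ~~ Glt x y, Geq x y & ~~ Ggt x y]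
    | [/\ ~~ Glt x y, ~~ Geq x y & Ggt x y]].
Proof.
case: partition => _ _ _ /[apply] /or3P.
by case=> /andP [/andP [? ?] ?]; [apply: Or31 | apply: Or32 | apply: Or33].
Qed.

Lemma GgtE x y : x <> y -> Ggt x y = ~~ Gle x y.
Proof.
move=> /partitionP; rewrite /Gle.
by case: (Glt x y); case: (Geq x y); case: (Ggt x y); case=> [] [].
Qed.

Lemma Glt_Gle x y : Glt x y -> Gle x y. Proof. by rewrite /Gle => ->. Qed.

Lemma Gle_neq x y : Gle x y -> x <> y. Proof. by move=> xy exy; rewrite exy Gle_irr in xy. Qed.

Lemma Gle_Ggt x y : Gle x y -> ~~ Ggt x y.
Proof. by move=> xy; rewrite GgtE ?xy //; exact: Gle_neq. Qed.

Lemma Glt_Ggt x y : Glt x y -> ~~ Ggt x y. Proof. by move/Glt_Gle/Gle_Ggt. Qed.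

Lemma Geq_Ggt x y : Geq x y -> ~~ Ggt x y.
Proof. by move=> xy; apply: Gle_Ggt; rewrite /Gle xy orbT. Qed.

Lemma Glt_Geq x y : Glt x y -> ~~ Geq x y.
Proof.
move=> xy; have /partitionP : x <> y by apply/Gle_neq/Glt_Gle.
by rewrite xy; case=> [] [].
Qed.

Lemma Gle_P4 a b c e : cograph Ggt -> Gle a b -> Gle b c -> Gle c e ->
  a <> c -> b <> e -> a <> e -> [|| Gle a c, Gle b e | Gle a e].
Proof.
move=> Ggt_cograph ab bc ce ac be ae.
apply: contraT => /norP [/negbTE nac /norP [/negbTE nbe /negbTE nae]].
have := Gle_neq ab; have := Gle_neq bc; have := Gle_neq ce => ce' bc' ab'.
have ne (u v : L) : u <> v -> u != v by move=> uv; apply/eqP.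
have uniq_beac : uniq [:: b; e; a; c].
  by rewrite /= !inE !negb_or !ne // => [/esym|/esym|/esym].
exfalso; apply: (Ggt_cograph _ _ _ _ uniq_beac).
rewrite !GgtE // => [|/esym //|/esym //|/esym //].
by rewrite (GleC e a) (GleC b a) (GleC e c) nac nbe nae ab bc ce.
Qed.

Definition agrees x y (a b : R) : Prop :=
  [/\ Glt x y -> (a < b)%R, Geq x y -> a = b & Ggt x y -> (b < a)%R].

Lemma agrees_Glt x y a b : Glt x y -> (a < b)%R -> agrees x y a b.
Proof. by move=> xy ab; split=> // [/(negP (Glt_Geq xy))|/(negP (Glt_Ggt xy))]. Qed.

Lemma agrees_Geq x y a b : Geq x y -> a = b -> agrees x y a b.
Proof.
move=> xy ab; split=> // [xy'|/(negP (Geq_Ggt xy))] //.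
by have /negP := Glt_Geq xy'.
Qed.

Lemma agrees_Ggt x y a b : Ggt x y -> (b < a)%R -> agrees x y a b.
Proof.
move=> xy ab; split=> // [/Glt_Ggt|/Geq_Ggt]; rewrite xy //.
Qed.

Lemma agreesE x y a b : x <> y -> agrees x y a b ->
  [/\ Glt x y <-> (a < b)%R, Geq x y <-> a = b & Ggt x y <-> (b < a)%R].
Proof.
move=> /partitionP xy [lt eq gt].
case: xy => [[xy /negbTE -> /negbTE ->]|[/negbTE -> xy /negbTE ->]|[/negbTE -> /negbTE -> xy]].
- by have := lt xy; rewrite xy; split; split=> // ?; lra.
- by have := eq xy; rewrite xy; split; split=> // ?; lra.
- by have := gt xy; rewrite xy; split; split=> // ?; lra.
Qed.

Section Core.
Variable s : L -> L -> R.
Hypothesis s_sym : forall x y, s x y = s y x.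
Hypothesis s_ultra : forall x y z, (s x z <= Rmax (s x y) (s y z))%R.
Hypothesis s_diag : forall x, s x x = 1%R.
Hypothesis s_ge1 : forall x y, (1 <= s x y)%R.
Hypothesis s_Gle : forall x y, Gle x y -> (1 < s x y)%R.
Hypothesis Glt_triple : forall x y z, (1 < s x y)%R -> (1 < s x z)%R -> (1 < s y z)%R ->
  Glt x z -> Glt y z -> ~~ Glt x y -> (s x y < s x z)%R /\ s x z = s y z.
Hypothesis Ggt_triple : forall x y z, (1 < s x y)%R -> (1 < s x z)%R -> (1 < s y z)%R ->
  Ggt x y -> ~~ Ggt x z -> ~~ Ggt y z -> (s x y < s x z)%R /\ s x z = s y z.
Hypothesis Geq_no_triple : forall x y z, (1 < s x y)%R -> (1 < s x z)%R -> (1 < s y z)%R ->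
  Geq x z -> Geq y z -> ~~ Geq x y -> ~ ((s x z < s x y)%R /\ s x y = s z y).
Hypothesis Glt_cograph : cograph Glt.
Hypothesis Ggt_cograph : cograph Ggt.

Lemma s_Glt x y : Glt x y -> (1 < s x y)%R. Proof. by move/Glt_Gle; exact: s_Gle. Qed.

Section Level.
Variables (A : {set L}) (th : R).
Hypothesis th_gt1 : (1 < th)%R.
Hypothesis s_le_th : forall x y, x \in A -> y \in A -> (s x y <= th)%R.

(* [th] stands for the time of the species root of [A]: [within x y] says that the
   colours of [x] and [y] lie below the same child of that root. *)
Definition within x y := `[< (s x y < th)%R >].

Lemma withinC x y : within x y = within y x. Proof. by rewrite /within s_sym. Qed.

Lemma within_refl x : within x x. Proof. by apply/asboolP; rewrite s_diag. Qed.

Lemma within_trans x y z : within x y -> within y z -> within x z.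
Proof.
move=> /asboolP xy /asboolP yz; apply/asboolP.
by have := s_ultra x y z; have := Rmax_lub_lt _ _ _ xy yz; lra.
Qed.

Lemma within_cross x y z : within x y -> ~~ within y z -> ~~ within x z.
Proof. by move=> xy; apply: contra => xz; apply: within_trans xz; rewrite withinC. Qed.

Lemma crossE x y : x \in A -> y \in A -> ~~ within x y -> s x y = th.
Proof. by move=> xA yA /asboolPn xy; have := s_le_th xA yA; lra. Qed.

Lemma cross_gt1 x y : x \in A -> y \in A -> ~~ within x y -> (1 < s x y)%R.
Proof. by move=> xA yA xy; rewrite (crossE xA yA xy). Qed.

Lemma cross_neq x y : ~~ within x y -> x <> y.
Proof. by move=> xy exy; rewrite exy within_refl in xy. Qed.

Definition near x y : bool := [|| x == y, Gle x y | [exists z in A, Gle x z && Gle z y]].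

Lemma nearC x y : near x y = near y x.
Proof.
rewrite /near eq_sym GleC; congr [|| _, _ | _]; apply/exists_inP/exists_inP;
  by move=> [z zA /andP [xz zy]]; exists z; rewrite // GleC andbC GleC xz zy.
Qed.

Lemma Gle_near x y : Gle x y -> near x y.
Proof. by move=> xy; rewrite /near xy orbT. Qed.

Lemma near_via z x y : z \in A -> Gle x z -> Gle z y -> near x y.
Proof. by move=> zA xz zy; rewrite /near; apply/or3P/Or33/exists_inP; exists z; rewrite ?xz. Qed.

Lemma near_P3 a b c e : b \in A -> c \in A -> Gle a b -> Gle b c -> Gle c e -> near a e.
Proof.
move=> bA cA ab bc ce.
have [->|ae] := eqVneq a e; first by rewrite /near eqxx.
have [ac|ac] := eqVneq a c; first by rewrite /near ac ce orbT.
have [be|ne_be] := eqVneq b e; first by rewrite /near -be ab orbT.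
rewrite /near.
case/or3P: (Gle_P4 Ggt_cograph ab bc ce (elimN eqP ac) (elimN eqP ne_be) (elimN eqP ae)).
- by move=> ac'; apply: near_via ac' ce.
- by move=> be'; apply: near_via ab be'.
- by move=> ae'; rewrite ae' orbT.
Qed.

Lemma near_edge x y w : y \in A -> near x y -> Gle y w -> near x w.
Proof.
move=> yA /or3P [/eqP <-|xy|/exists_inP [z zA /andP [xz zy]]] yw; first exact: Gle_near.
  exact: near_via xy yw.
exact: near_P3 zA yA xz zy yw.
Qed.

Lemma near_trans x y w : y \in A -> w \in A -> near x y -> near y w -> near x w.
Proof.
move=> yA wA xy /or3P [/eqP <- //|yw|/exists_inP [z zA /andP [yz zw]]].
  exact: near_edge yA xy yw.
exact: near_edge zA (near_edge yA xy yz) zw.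
Qed.

Lemma near_cross x y : x \in A -> y \in A -> near x y -> ~~ within x y -> Gle x y.
Proof.
move=> xA yA /or3P [/eqP exy|//|/exists_inP [z zA /andP [xz zy]]] xy.
  by move: xy; rewrite exy within_refl.
apply: contraT => not_xy.
have s_yz : (1 < s y z)%R by rewrite s_sym; exact: s_Gle zy.
have gt_xy : Ggt x y by rewrite GgtE //; exact: cross_neq.
have ngt_yz : ~~ Ggt y z by rewrite GgtC; exact: Gle_Ggt zy.
have [lt_xy _] := Ggt_triple (cross_gt1 xA yA xy) (s_Gle xz) s_yz gt_xy (Gle_Ggt xz) ngt_yz.
by have := s_le_th xA zA; rewrite (crossE xA yA xy) in lt_xy; lra.
Qed.

Definition link x y := [&& x \in A, y \in A & if within x y then Gle x y else Glt x y].

Lemma linkC x y : link x y = link y x.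
Proof. by rewrite /link withinC GleC GltC andbCA. Qed.

Lemma connect_linkC x y : connect link x y = connect link y x.
Proof. by apply: sym_connect_sym => u v; exact: linkC. Qed.

Lemma Glt_across_Gle x z y : x \in A -> z \in A -> y \in A ->
  within x z -> Gle x z -> ~~ within z y -> Glt z y -> ~~ within x y -> Glt x y.
Proof.
move=> xA zA yA /asboolP xz_th le_xz zy_out lt_zy xy_out; apply: contraT => not_xy.
have s_xz := s_Gle le_xz; have s_zy := s_Glt lt_zy; have s_xy := cross_gt1 xA yA xy_out.
have s_yz : (1 < s y z)%R by rewrite s_sym.
have e_xy := crossE xA yA xy_out; have e_zy := crossE zA yA zy_out.
case/orP: (le_xz) => [lt_xz|eq_xz].
  have lt_yz : Glt y z by rewrite GltC.
  by have [] := Glt_triple s_xy s_xz s_yz lt_xz lt_yz not_xy; lra.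
case gt_xy: (Ggt x y).
  have ngt_yz : ~~ Ggt y z by rewrite GgtC; exact: Glt_Ggt.
  by have [] := Ggt_triple s_xy s_xz s_yz gt_xy (Geq_Ggt eq_xz) ngt_yz; lra.
have eq_xy : Geq x y.
  by case: (partitionP (cross_neq xy_out)) => [] []; rewrite ?gt_xy ?(negbTE not_xy).
have s_zx : (1 < s z x)%R by rewrite s_sym.
have s_yx : (1 < s y x)%R by rewrite s_sym.
have eq_zx : Geq z x by rewrite GeqC.
have eq_yx : Geq y x by rewrite GeqC.
exfalso; apply: (Geq_no_triple s_zy s_zx s_yx eq_zx eq_yx (Glt_Geq lt_zy)).
by rewrite (s_sym z x) e_zy e_xy; split=> //; lra.
Qed.

Lemma Glt_across_trans x p q : x \in A -> p \in A -> q \in A ->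
  ~~ within x p -> ~~ within p q -> ~~ within x q -> Glt x p -> Glt p q -> Glt x q.
Proof.
move=> xA pA qA xp pq xq lt_xp lt_pq; apply: contraT => not_xq.
have s_qp : (1 < s q p)%R by rewrite s_sym; exact: cross_gt1 pA qA pq.
have lt_qp : Glt q p by rewrite GltC.
have [] := Glt_triple (cross_gt1 xA qA xq) (cross_gt1 xA pA xp) s_qp lt_xp lt_qp not_xq.
by rewrite (crossE xA qA xq) (crossE xA pA xp); lra.
Qed.

Lemma Glt_across_P4 x p q y : x \in A -> p \in A -> q \in A -> y \in A ->
  Glt x p -> Glt p q -> Glt q y -> within x q -> within p y ->
  ~~ within x p -> ~~ within x y -> Glt x y.
Proof.
move=> xA pA qA yA lt_xp lt_pq lt_qy xq py xp xy; apply: contraT => not_xy.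
have qy : ~~ within q y by apply: within_cross xy; rewrite withinC.
case lt_xq: (Glt x q).
  by rewrite (Glt_across_Gle xA qA yA xq (Glt_Gle lt_xq) qy lt_qy xy) in not_xy.
case lt_py: (Glt p y).
  have yp : within y p by rewrite withinC.
  have le_yp : Gle y p by rewrite GleC; exact: Glt_Gle.
  have px : ~~ within p x by rewrite withinC.
  have lt_px : Glt p x by rewrite GltC.
  have yx : ~~ within y x by rewrite withinC.
  by have := Glt_across_Gle yA pA xA yp le_yp px lt_px yx; rewrite GltC (negbTE not_xy).
have ne (u v : L) : u <> v -> u != v by move=> uv; apply/eqP.
have pq : p <> q by move=> epq; rewrite epq Glt_irr in lt_pq.
have py' : p <> y by move=> epy; rewrite -epy lt_xp in not_xy.
have xq' : x <> q by move=> exq; rewrite exq lt_qy in not_xy.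
have uniq_xpqy : uniq [:: x; p; q; y].
  rewrite /= !inE !negb_or (ne _ _ (cross_neq xp)) (ne _ _ xq') (ne _ _ (cross_neq xy)).
  by rewrite (ne _ _ pq) (ne _ _ py') (ne _ _ (cross_neq qy)).
exfalso; apply: (Glt_cograph uniq_xpqy).
by rewrite lt_xq lt_py (negbTE not_xy).
Qed.

Definition link_invariant x p : Prop :=
  [/\ p \in A, ~~ within x p -> Glt x p &
      within x p -> forall y, y \in A -> ~~ within x y -> Glt p y -> Glt x y].

Lemma link_invariant_within_step x p q : x \in A -> link_invariant x p ->
  q \in A -> within p q -> Gle p q -> link_invariant x q.
Proof.
move=> xA [pA lt_xp reach_p] qA pq le_pq.
have [xp|xp] := boolP (within x p).
  have xq : within x q := within_trans xp pq.
  split=> // [xq'|_ y yA xy lt_qy]; first by rewrite xq in xq'.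
  have qy : ~~ within q y by apply: within_cross xy; rewrite withinC.
  apply: reach_p => //; exact: Glt_across_Gle pA qA yA pq le_pq qy lt_qy (within_cross pq qy).
have xq : ~~ within x q by rewrite withinC; apply: (within_cross (y := p)); rewrite withinC.
split=> // [_|]; last by rewrite (negbTE xq).
rewrite GltC; apply: Glt_across_Gle qA pA xA _ _ _ _ _.
- by rewrite withinC.
- by rewrite GleC.
- by rewrite withinC.
- by rewrite GltC; exact: lt_xp.
- by rewrite withinC.
Qed.

Lemma link_invariant_cross_step x p q : x \in A -> link_invariant x p ->
  q \in A -> ~~ within p q -> Glt p q -> link_invariant x q.
Proof.
move=> xA [pA lt_xp reach_p] qA pq lt_pq.
have [xp|xp] := boolP (within x p).
  have xq : ~~ within x q by apply: within_cross xp pq.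
  by split=> // [_|xq']; [exact: reach_p | rewrite xq' in xq].
have [xq|xq] := boolP (within x q); last first.
  split=> // [_|xq']; last by rewrite xq' in xq.
  exact: Glt_across_trans xA pA qA xp pq xq (lt_xp xp) lt_pq.
split=> // [xq'|_ y yA xy lt_qy]; first by rewrite xq in xq'.
have qy : ~~ within q y by apply: within_cross xy; rewrite withinC.
have [py|py] := boolP (within p y).
  exact: Glt_across_P4 xA pA qA yA (lt_xp xp) lt_pq lt_qy xq py xp xy.
have lt_py := Glt_across_trans pA qA yA pq qy py lt_pq lt_qy.
exact: Glt_across_trans xA pA yA xp py xy (lt_xp xp) lt_py.
Qed.

Lemma connect_link_invariant x y : x \in A -> connect link x y -> link_invariant x y.
Proof.
move=> xA /connectP [p xp ->]; move: xp.
suff inv_path z : link_invariant x z -> path link z p -> link_invariant x (last z p).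
  by apply: inv_path; split=> //; rewrite within_refl.
elim: p z => [//|q p IH] z inv_z /= /andP [/and3P [_ qA zq] qp].
apply: IH qp; case: (boolP (within z q)) zq => zq link_zq.
  exact: link_invariant_within_step inv_z qA zq link_zq.
exact: link_invariant_cross_step inv_z qA zq link_zq.
Qed.

Lemma connect_link_Glt x y : x \in A -> connect link x y -> ~~ within x y -> Glt x y.
Proof. by move=> xA /(connect_link_invariant xA) []. Qed.

End Level.

Record fitting (A : {set L}) (be : R) (t : L -> L -> R) : Prop := Fitting {
  fitting_diag : forall x, x \in A -> t x x = 1%R;
  fitting_sym : forall x y, x \in A -> y \in A -> t x y = t y x;
  fitting_ultra : forall x y z, x \in A -> y \in A -> z \in A ->
    (t x z <= Rmax (t x y) (t y z))%R;
  fitting_range : forall x y, x \in A -> y \in A -> x <> y -> (1 < t x y < be)%R;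
  fitting_agrees : forall x y, x \in A -> y \in A -> x <> y -> agrees x y (t x y) (s x y)
}.

Lemma base_fitting (A : {set L}) be :
  (forall x y, x \in A -> y \in A -> (s x y <= 1)%R) ->
  (forall x y, x \in A -> y \in A -> (s x y < be)%R) -> exists t, fitting A be t.
Proof.
move=> s_le1 s_lt_be.
have be_gt1 x : x \in A -> (1 < be)%R by move=> xA; have := s_lt_be x x xA xA; rewrite s_diag.
exists (fun x y => if x == y then 1%R else ((1 + be) / 2)%R); split.
- by move=> x _; rewrite eqxx.
- by move=> x y _ _; rewrite eq_sym.
- move=> x y z xA _ _; have := be_gt1 x xA.
  case: (x =P z) => [_|xz] be1.
    by case: (x == y); case: (y == z); rewrite /Rmax; case: Rle_dec; lra.
  case: (x =P y) => [<-|_]; last exact: Rmax_l.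
  by case: (x =P z) => // _; exact: Rmax_r.
- by move=> x y xA _ /eqP /negbTE ->; have := be_gt1 x xA; lra.
move=> x y xA yA xy; have := be_gt1 x xA; have := s_le1 x y xA yA; have := s_ge1 x y.
have gt_xy : Ggt x y.
  by rewrite GgtE //; apply/negP => /s_Gle; have := s_le1 x y xA yA; lra.
by move/eqP/negbTE: xy => -> *; apply: agrees_Ggt => //; lra.
Qed.

Section Step.
Variables (A : {set L}) (a b : L) (ga th' be : R).
Local Notation th := (s a b).
Hypotheses (aA : a \in A) (bA : b \in A).
Hypothesis s_le_th : forall x y, x \in A -> y \in A -> (s x y <= th)%R.
Hypothesis th_gt1 : (1 < th)%R.
Hypothesis s_gap : forall x y, x \in A -> y \in A -> (s x y < th)%R -> (s x y < ga)%R.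
Hypothesis ga_lt_th : (ga < th)%R.
Hypotheses (th_lt_th' : (th < th')%R) (th'_lt_be : (th' < be)%R).
Hypothesis fitting_smaller : forall B : {set L}, #|B| < #|A| ->
  (forall x y, x \in B -> y \in B -> (s x y < ga)%R) -> exists t, fitting B ga t.

Local Notation within := (within th).
Local Notation link := (link A th).

Definition same_block x y := connect link x y && within x y.

Definition block x : {set L} := [set y in A | same_block x y].

Lemma same_blockC x y : same_block x y = same_block y x.
Proof. by rewrite /same_block connect_linkC withinC. Qed.

Lemma same_block_trans x y z : same_block x y -> same_block y z -> same_block x z.
Proof.
move=> /andP [cxy wxy] /andP [cyz wyz]; apply/andP.
by split; [exact: connect_trans cxy cyz | exact: within_trans wxy wyz].
Qed.

Lemma block_eq x y : same_block x y -> block y = block x.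
Proof.
move=> xy; apply/setP => z; rewrite !inE; case: (z \in A) => //=.
apply/idP/idP => [|xz]; first exact: same_block_trans.
by rewrite same_blockC in xy; exact: same_block_trans xy xz.
Qed.

Lemma mem_block x y : y \in A -> same_block x y -> y \in block x.
Proof. by move=> yA xy; rewrite inE yA. Qed.

Lemma block_self x : x \in A -> x \in block x.
Proof. by move=> xA; rewrite mem_block // /same_block connect0 within_refl. Qed.

Lemma block_card_lt x : x \in A -> #|block x| < #|A|.
Proof.
move=> xA; apply: proper_card; apply/properP; split.
  by apply/subsetP => y; rewrite inE => /andP [].
have : ~~ within x a || ~~ within x b.
  apply: contraT => /norP [/negPn /asboolP xa /negPn /asboolP xb].
  by have := s_ultra a x b; rewrite (s_sym a x); have := Rmax_lub_lt _ _ _ xa xb; lra.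
by case/orP => out; [exists a | exists b] => //; rewrite inE /same_block (negbTE out) !andbF.
Qed.

Lemma block_s_lt_ga x y z : x \in A -> y \in block x -> z \in block x -> (s y z < ga)%R.
Proof.
move=> xA; rewrite !inE => /and3P [yA _ xy] /and3P [zA _ xz].
have /asboolP yz : within y z by apply: within_trans xz; rewrite withinC.
exact: s_gap.
Qed.

Lemma block_fitting_ex (B : {set L}) : exists t,
  (#|B| < #|A| /\ forall y z, y \in B -> z \in B -> (s y z < ga)%R) -> fitting B ga t.
Proof.
have [[B_lt s_B]|not_small] :=
  pselect (#|B| < #|A| /\ forall y z, y \in B -> z \in B -> (s y z < ga)%R).
  by have [t t_fit] := fitting_smaller B_lt s_B; exists t.
by exists (fun _ _ => 0%R) => /not_small.
Qed.

Definition block_metric (B : {set L}) : L -> L -> R := sval (cid (block_fitting_ex B)).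

Lemma block_metric_fitting x : x \in A -> fitting (block x) ga (block_metric (block x)).
Proof.
move=> xA; apply: (svalP (cid (block_fitting_ex (block x)))).
by split=> [|y z]; [exact: block_card_lt | exact: block_s_lt_ga].
Qed.

Lemma ga_gt1 : (1 < ga)%R.
Proof. by rewrite -(s_diag a); apply: s_gap => //; rewrite s_diag. Qed.

Definition block_dist x y := if same_block x y then block_metric (block x) x y else ga.
Definition link_dist x y := if connect link x y then block_dist x y else th.
Definition step_metric x y := if near A x y then link_dist x y else th'.

Lemma block_metric_le_ga x y : x \in A -> y \in A -> same_block x y ->
  (block_metric (block x) x y <= ga)%R.
Proof.
move=> xA yA xy; have [diag _ _ range _] := block_metric_fitting xA.
have [<-|neq] := eqVneq x y; first by rewrite diag ?block_self //; have := ga_gt1; lra.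
have [_ ] := range x y (block_self xA) (mem_block yA xy) (elimN eqP neq); lra.
Qed.

Lemma block_dist_ultra x y z : x \in A -> y \in A -> z \in A ->
  (block_dist x z <= Rmax (block_dist x y) (block_dist y z))%R.
Proof.
move: x y z; rewrite /block_dist.
apply: (nested_ultra (D := fun x => x \in A) (u := fun x y => block_metric (block x) x y)).
  move=> x y z _ _ _; exact: same_block_trans.
  move=> x y z xA yA zA xy yz xz /=; rewrite (block_eq xy).
  have [_ _ ultra _ _] := block_metric_fitting xA.
  by apply: ultra; rewrite ?block_self ?mem_block.
exact: block_metric_le_ga.
Qed.

Lemma link_dist_ultra x y z : x \in A -> y \in A -> z \in A ->
  (link_dist x z <= Rmax (link_dist x y) (link_dist y z))%R.
Proof.
move: x y z; rewrite /link_dist; apply: (nested_ultra (D := fun x => x \in A)).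
- by move=> x y z _ _ _; exact: connect_trans.
- by move=> x y z xA yA zA _ _ _; exact: block_dist_ultra.
- move=> x y xA yA _; rewrite /block_dist; case: ifP => [xy|_]; last lra.
  by have := block_metric_le_ga xA yA xy; lra.
Qed.

Lemma step_metric_ultra x y z : x \in A -> y \in A -> z \in A ->
  (step_metric x z <= Rmax (step_metric x y) (step_metric y z))%R.
Proof.
move: x y z; rewrite /step_metric; apply: (nested_ultra (D := fun x => x \in A)).
- by move=> x y z _ yA zA; exact: near_trans.
- by move=> x y z xA yA zA _ _ _; exact: link_dist_ultra.
- move=> x y xA yA _; rewrite /link_dist /block_dist; case: ifP => _; last lra.
  case: ifP => [xy|_]; last lra.
  by have := block_metric_le_ga xA yA xy; lra.
Qed.

Lemma step_metric_diag x : x \in A -> step_metric x x = 1%R.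
Proof.
move=> xA; have [diag _ _ _ _] := block_metric_fitting xA.
rewrite /step_metric /link_dist /block_dist /near eqxx connect0 /same_block connect0.
by rewrite (within_refl th_gt1) /= diag // block_self.
Qed.

Lemma step_metric_sym x y : x \in A -> y \in A -> step_metric x y = step_metric y x.
Proof.
move=> xA yA; rewrite /step_metric /link_dist /block_dist nearC connect_linkC same_blockC.
case: ifP => // _; case: ifP => // _; case: ifP => // yx.
rewrite (block_eq yx); have [_ sym _ _ _] := block_metric_fitting yA.
by rewrite sym ?block_self ?mem_block // same_blockC.
Qed.

Lemma step_metric_agrees x y : x \in A -> y \in A -> x <> y ->
  (1 < step_metric x y < be)%R /\ agrees x y (step_metric x y) (s x y).
Proof.
move=> xA yA xy; have s_xy := s_le_th xA yA; have := ga_gt1.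
rewrite /step_metric; case: ifP => [near_xy|/negbT not_near]; last first.
  have gt_xy : Ggt x y by rewrite GgtE //; apply: contra not_near; exact: Gle_near.
  by split; [split | apply: (agrees_Ggt gt_xy)]; lra.
rewrite /link_dist; case: ifP => [conn_xy|/negbT not_conn]; last first.
  have not_link : ~~ link x y by apply: contra not_conn; exact: connect1.
  have [in_xy|out_xy] := boolP (within x y).
    have gt_xy : Ggt x y by rewrite GgtE //; apply: contra not_link => ?; rewrite /link xA yA in_xy.
    by move/asboolP: in_xy; split; [split | apply: (agrees_Ggt gt_xy)]; lra.
  have le_xy := near_cross th_gt1 s_le_th xA yA near_xy out_xy.
  have eq_xy : Geq x y.
    by case/orP: le_xy => // lt_xy; move: not_link; rewrite /link xA yA (negbTE out_xy) lt_xy.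
  by have := crossE s_le_th xA yA out_xy; split; [split | apply: (agrees_Geq eq_xy)]; lra.
rewrite /block_dist; case: ifP => [block_xy|/negbT not_block]; last first.
  have out_xy : ~~ within x y by move: not_block; rewrite /same_block conn_xy.
  have lt_xy := connect_link_Glt th_gt1 s_le_th xA conn_xy out_xy.
  by have := crossE s_le_th xA yA out_xy; split; [split | apply: (agrees_Glt lt_xy)]; lra.
have [_ _ _ range agree] := block_metric_fitting xA.
have [x_in y_in] := (block_self xA, mem_block yA block_xy).
by have := range _ _ x_in y_in xy; split; [split; lra | exact: agree].
Qed.

Lemma step_fitting : exists t, fitting A be t.
Proof.
exists step_metric; split.
- exact: step_metric_diag.
- exact: step_metric_sym.
- exact: step_metric_ultra.
- by move=> x y xA yA xy; have [] := step_metric_agrees xA yA xy.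
- by move=> x y xA yA xy; have [] := step_metric_agrees xA yA xy.
Qed.

End Step.

Lemma fitting_exists n (A : {set L}) be : #|A| <= n ->
  (forall x y, x \in A -> y \in A -> (s x y < be)%R) -> exists t, fitting A be t.
Proof.
elim: n A be => [|n IH] A be An s_lt_be.
  apply: base_fitting => // x y xA.
  by move: An; rewrite leqn0 => /eqP/cards0_eq A0; rewrite A0 inE in xA.
have [[a0 [b0 [a0A [b0A s_ab0]]]]|all_le1] :=
  pselect (exists a b, [/\ a \in A, b \in A & (1 < s a b)%R]); last first.
  apply: base_fitting => // x y xA yA; apply: Rnot_lt_le => s_xy.
  by apply: all_le1; exists x, y.
have ab0_A : (a0, b0) \in setX A A by rewrite in_setX a0A b0A.
have [[a b] /= ab_A ab_max] :=
  exists_argmax (fun p => p \in setX A A) (fun p => s p.1 p.2) (ex_intro _ (a0, b0) ab0_A).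
move: ab_A; rewrite in_setX => /andP [aA bA].
have s_le_th x y : x \in A -> y \in A -> (s x y <= s a b)%R.
  by move=> xA yA; apply: (ab_max (x, y)); rewrite in_setX xA yA.
have th_gt1 : (1 < s a b)%R by have := s_le_th _ _ a0A b0A; lra.
have aa_A : ((a, a) \in setX A A) && `[< (s a a < s a b)%R >].
  by rewrite in_setX aA; apply/asboolP; rewrite s_diag.
have [[c d] /= /andP [_ /asboolP cd_lt] cd_max] :=
  exists_argmax (fun p => (p \in setX A A) && `[< (s p.1 p.2 < s a b)%R >])
    (fun p => s p.1 p.2) (ex_intro _ (a, a) aa_A).
have s_gap x y : x \in A -> y \in A -> (s x y < s a b)%R -> (s x y <= s c d)%R.
  by move=> xA yA lt; apply: (cd_max (x, y)); rewrite in_setX xA yA; apply/asboolP.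
have th_lt_be := s_lt_be a b aA bA.
have cd_ge1 := s_ge1 c d.
apply: (@step_fitting A a b ((s a b + s c d) / 2) ((s a b + be) / 2) be) => //; try lra.
- by move=> x y xA yA /(s_gap x y xA yA); lra.
- move=> B B_lt s_B; apply: IH => //; rewrite -ltnS; exact: leq_trans B_lt An.
Qed.

End Core.
End GraphPartition.

Section Sufficiency.
Variables (L M V0 : finType) (Glt Geq Ggt : rel L) (sigma : L -> M) (l0 : L).
Variables (S : ptree V0) (lfS : M -> V0).
Hypothesis partition : graph3partition Glt Geq Ggt.
Hypothesis Glt_colored : properly_colored Glt sigma.
Hypothesis Geq_colored : properly_colored Geq sigma.
Hypothesis Glt_cograph : cograph Glt.
Hypothesis Ggt_cograph : cograph Ggt.
Hypothesis S_labelled : labelled_phylo S lfS.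
Hypothesis RS_displayed : forall X Y Z, RS Glt Geq Ggt sigma X Y Z -> displays S lfS X Y Z.
Hypothesis FS_not_displayed : forall X Y Z, FS Glt Geq Ggt sigma X Y Z -> ~ displays S lfS X Y Z.

(* Any time map would do; this one puts every leaf at time 1. *)
Let tS v := INR #|desc S v|.
Let tS_time : time_map S tS := @card_desc_time _ S.

Let lfS_leaf X : is_leaf S (lfS X).
Proof. by have [_ _ leaves] := S_labelled; apply/leaves; exists X. Qed.

Let tS_leaf X : tS (lfS X) = 1%R.
Proof. by rewrite /tS card_desc_leaf. Qed.

Definition species_dist x y := tS (lca S (lfS (sigma x)) (lfS (sigma y))).
Local Notation s := species_dist.

Lemma species_dist_sym x y : s x y = s y x. Proof. by rewrite /s lcaC. Qed.

Lemma species_dist_ultra x y z : (s x z <= Rmax (s x y) (s y z))%R.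
Proof. exact: time_lca_ultra. Qed.

Lemma species_dist_diag x : s x x = 1%R. Proof. by rewrite /s lcaxx tS_leaf. Qed.

Lemma species_dist_ge1 x y : (1 <= s x y)%R.
Proof.
by rewrite -(tS_leaf (sigma x)); apply: (time_preceq tS_time); exact: preceq_lcal.
Qed.

Lemma species_dist_gt1 x y : (1 < s x y)%R <-> sigma x <> sigma y.
Proof.
split=> [lt exy|xy]; first by move: lt; rewrite /s exy lcaxx tS_leaf; lra.
have [_ lfS_inj _] := S_labelled.
by rewrite -(tS_leaf (sigma x)); apply: time_leaf_lt_lca => // /lfS_inj.
Qed.

Lemma species_dist_Gle x y : Gle Glt Geq x y -> (1 < s x y)%R.
Proof. by move=> /orP [/Glt_colored|/Geq_colored] /species_dist_gt1. Qed.

Lemma species_dist_displays x y z :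
  displays S lfS (sigma x) (sigma y) (sigma z) <-> (s x y < s x z)%R /\ s x z = s y z.
Proof. exact: displaysE. Qed.

Lemma species_Glt_triple x y z : (1 < s x y)%R -> (1 < s x z)%R -> (1 < s y z)%R ->
  Glt x z -> Glt y z -> ~~ Glt x y -> (s x y < s x z)%R /\ s x z = s y z.
Proof.
move=> /species_dist_gt1 xy /species_dist_gt1 xz /species_dist_gt1 yz.
move=> lt_xz lt_yz /negP nlt_xy.
apply/species_dist_displays/RS_displayed.
by exists x, y, z; do 3 split=> //; split; [split | left].
Qed.

Lemma species_Ggt_triple x y z : (1 < s x y)%R -> (1 < s x z)%R -> (1 < s y z)%R ->
  Ggt x y -> ~~ Ggt x z -> ~~ Ggt y z -> (s x y < s x z)%R /\ s x z = s y z.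
Proof.
move=> /species_dist_gt1 xy /species_dist_gt1 xz /species_dist_gt1 yz.
move=> gt_xy /negP ngt_xz /negP ngt_yz.
apply/species_dist_displays/RS_displayed.
by exists x, y, z; do 3 split=> //; split; [split | right].
Qed.

Lemma species_Geq_no_triple x y z : (1 < s x y)%R -> (1 < s x z)%R -> (1 < s y z)%R ->
  Geq x z -> Geq y z -> ~~ Geq x y -> ~ ((s x z < s x y)%R /\ s x y = s z y).
Proof.
move=> /species_dist_gt1 xy /species_dist_gt1 xz /species_dist_gt1 yz.
move=> eq_xz eq_yz /negP neq_xy.
move/species_dist_displays; apply: FS_not_displayed.
by exists x, y, z; split; [split | do 3 split=> //; left].
Qed.

Lemma sufficient_scenario : explained_by_relaxed_scenario Glt Geq Ggt sigma.
Proof.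
have [S_phylo lfS_inj _] := S_labelled.
have s_lt_top x y : (s x y < tS (pt0 S))%R.
  by apply: time_lca_lt_pt0 => //; [case: (lfS_leaf (sigma x)) | case: (lfS_leaf (sigma y))].
have [t [t_diag t_sym t_ultra t_range t_agrees]] :=
  fitting_exists partition species_dist_sym species_dist_ultra species_dist_diag species_dist_ge1
    species_dist_Gle species_Glt_triple species_Ggt_triple species_Geq_no_triple
    Glt_cograph Ggt_cograph (leqnn #|[set: L]|) (fun x y _ _ => s_lt_top x y).
have inT (x : L) : x \in [set: L] by rewrite inE.
have t_diag_lt x y : x <> y -> (t x x < t x y)%R.
  by move=> xy; rewrite t_diag //; have [] := t_range x y (inT x) (inT y) xy.
have t_lt_top x y : (t x y < tS (pt0 S))%R.
  have [<-|xy] := pselect (x = y); last by have [] := t_range x y (inT x) (inT y) xy.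
  by rewrite t_diag //; have := s_lt_top x x; rewrite species_dist_diag.
have [VT [T [lfT [tT [T_labelled tT_time tT_pt0 tT_lca]]]]] :=
  ultrametric_tree l0 (fun x y => t_sym x y (inT x) (inT y))
    (fun x y z => t_ultra x y z (inT x) (inT y) (inT z)) t_diag_lt t_lt_top.
have tT_leaf x : tT (lfT x) = tS (lfS (sigma x)).
  by rewrite -(lcaxx T (lfT x)) tT_lca t_diag // tS_leaf.
have [mu scenario] := relaxed_scenario_of_times T_labelled S_phylo lfS_inj lfS_leaf tT_time
  tS_time tT_pt0 tT_leaf.
exists VT, V0, T, lfT, S, lfS, mu, tT, tS; split=> //.
have graphsE x y : [/\ Glt x y <-> x <> y /\ (t x y < s x y)%R,
    Geq x y <-> x <> y /\ t x y = s x y & Ggt x y <-> x <> y /\ (s x y < t x y)%R].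
  have [<-|xy] := pselect (x = y).
    rewrite (Glt_irr partition) (Geq_irr partition) (Ggt_irr partition).
    by split; split=> // [[]].
  have [lt eq gt] := agreesE partition xy (t_agrees x y (inT x) (inT y) xy).
  by split; [rewrite lt | rewrite eq | rewrite gt]; split=> // [[]].
by split=> [|]; [|split] => x y; rewrite scen_graphE tT_lca; have [] := graphsE x y.
Qed.

End Sufficiency.

Unset Implicit Arguments.

Theorem theorem2 (L M : finType) (Glt Geq Ggt : rel L) (sigma : L -> M)
  (HL : 0 < #|L|) (H3 : graph3partition Glt Geq Ggt) :
  explained_by_relaxed_scenario Glt Geq Ggt sigma <->
  [/\ properly_colored Glt sigma, properly_colored Geq sigma,
      cograph Glt, cograph Ggt &
      triples_consistent (RS Glt Geq Ggt sigma) (FS Glt Geq Ggt sigma)].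
Proof.
have [l0 _] : exists l0 : L, l0 \in L by apply/card_gt0P.
split.
  move=> [VT [VS [T [lfT [S [lfS [mu [tT [tS [scen [lt_scen [eq_scen gt_scen]]]]]]]]]]]].
  have [Glt_colored Geq_colored] := explained_properly_colored scen lt_scen eq_scen.
  have [Glt_cograph Ggt_cograph] := explained_cographs scen lt_scen gt_scen.
  by split=> //; exact: explained_triples_consistent l0 scen lt_scen eq_scen gt_scen.
case=> Glt_colored Geq_colored Glt_cograph Ggt_cograph.
move=> [V0 [S [lfS [S_phylo [lfS_inj [S_leaves [RS_displayed FS_not_displayed]]]]]]].
exact: (sufficient_scenario l0 H3 Glt_colored Geq_colored Glt_cograph Ggt_cograph
  (And3 S_phylo lfS_inj S_leaves) RS_displayed FS_not_displayed).
Qed.
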